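(* Let $|N|=n$, let $i\in N$ and $S\subset N\setminus\{i\}$, and let $\chi_{(S,S\cup\{i\})}\in\ell^2(E)$ be the indicator function equal to $1$ on the edge $(S,S\cup\{i\})$ and $0$ on all other edges. If $u\in\ell^2(V)$ satisfies $\mathrm{d}u = P\chi_{(S,S\cup\{i\})}$ and $u(\emptyset)=0$, then $$u(N)=\frac{|S|!\,(n-1-|S|)!}{n!}.$$
   Context: Let $N$ be a finite set of players. The hypercube graph $G=(V,E)$ has vertex set $V=2^N$ and oriented edge set $E=\{(S,S\cup\{i\}) : i\in N,\ S\subset N\setminus\{i\}\}$. $\ell^2(V)$ is the space of real functions on $V$, and $\ell^2(E)$ is the space of real functions on $E$ with inner product $\langle f,g\rangle=\sum_{e\in E}f(e)g(e)$. The operator $\mathrm{d}\colon \ell^2(V)\to\ell^2(E)$ is $\mathrm{d}u(S,S\cup\{i\}) = u(S\cup\{i\})-u(S)$, with range $\mathcal{R}(\mathrm{d})$. $P\colon\ell^2(E)\to\ell^2(E)$ is the orthogonal projection onto $\mathcal{R}(\mathrm{d})$. *)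

(* Players N = 'I_n, coalitions V = {set 'I_n}. *)
From HB Require Import structures.
From mathcomp Require Import all_boot all_order all_algebra.
Set Implicit Arguments. Unset Strict Implicit. Unset Printing Implicit Defensive.
Import Order.TTheory GRing.Theory Num.Theory.
Local Open Scope ring_scope.

(* Oriented edges of the hypercube: the edge (S, S ∪ {i}) is encoded by the
   pair (S, i) with i ∉ S. *)
Definition edge (n : nat) : finType :=
  {p : {set 'I_n} * 'I_n | p.2 \notin p.1}.

Definition dop (R : nzRingType) (n : nat) (u : {set 'I_n} -> R) : edge n -> R :=
  fun e => u ((val e).1 :|: [set (val e).2]) - u (val e).1.

Definition innerE (R : nzRingType) (n : nat) (f g : edge n -> R) : R :=
  \sum_(e : edge n) f e * g e.

(* Orthogonal projection P onto the range of d, given by its defining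
   property: g = P f  iff  g ∈ R(d) and f - g ⊥ R(d). *)
Definition is_proj_range_d (R : nzRingType) (n : nat) (f g : edge n -> R) : Prop :=
  (exists w : {set 'I_n} -> R, forall e, g e = dop w e) /\
  (forall w : {set 'I_n} -> R, innerE (fun e => f e - g e) (dop w) = 0).

Definition chi_edge (R : nzRingType) (n : nat) (S : {set 'I_n}) (i : 'I_n) : edge n -> R :=
  fun e => if val e == (S, i) then 1 else 0.

From HB Require Import structures.
From mathcomp Require Import all_boot all_order all_algebra.
From mathcomp Require Import zify ring.
Import Order.TTheory GRing.Theory Num.Theory.
Local Open Scope ring_scope.

(* Test the orthogonality of chi - du against the gradient of the potential
   w(T) = sum_(k < |T|) k!(n-1-k)!, whose value on an edge (T, T+j) is
   |T|!(n-1-|T|)!.  Against chi this yields |S|!(n-1-|S|)!.  Against du,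
   summation by parts gives sum_U u(U) d*(dw)(U), where a coalition U of size k
   receives k (k-1)!(n-k)! = k!(n-k)! through its k incoming edges and sends
   (n-k) k!(n-1-k)! = k!(n-k)! through its n-k outgoing ones; so d*(dw)
   vanishes except at N and at the empty set, and the pairing is
   n!(u(N) - u({})). *)

Section Hypercube.

Context {n : nat}.
Implicit Types (U : {set 'I_n}) (e : edge n).

Definition edge_src e : {set 'I_n} := (val e).1.
Definition edge_dir e : 'I_n := (val e).2.
Definition edge_tgt e : {set 'I_n} := edge_src e :|: [set edge_dir e].

Definition edges_from U := [set e | edge_src e == U].
Definition edges_into U := [set e | edge_tgt e == U].

Lemma edge_dir_notin_src e : edge_dir e \notin edge_src e.
Proof. exact: valP e. Qed.

Lemma edge_src_tgt e : edge_src e = edge_tgt e :\ edge_dir e.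
Proof. by rewrite /edge_tgt setUC setU1K // edge_dir_notin_src. Qed.

Lemma edge_inj e1 e2 :
  edge_src e1 = edge_src e2 -> edge_dir e1 = edge_dir e2 -> e1 = e2.
Proof.
move=> src12 dir12; apply: val_inj.
by rewrite [val e1]surjective_pairing [val e2]surjective_pairing; congr pair.
Qed.

Lemma card_edges_from U : #|edges_from U| = (n - #|U|)%N.
Proof.
have dir_inj : {in edges_from U &, injective edge_dir}.
  by move=> e1 e2; rewrite !inE => /eqP src1 /eqP src2; apply: edge_inj; rewrite src1.
rewrite -(card_in_imset dir_inj).
have -> : edge_dir @: edges_from U = ~: U.
  apply/setP => j; rewrite inE; apply/imsetP/idP => [[e] |jU].
    by rewrite inE => /eqP <- ->; exact: edge_dir_notin_src.
  by exists (exist _ (U, j) jU); rewrite ?inE.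
by rewrite cardsCs setCK card_ord.
Qed.

Lemma card_edges_into U : #|edges_into U| = #|U|.
Proof.
have dir_inj : {in edges_into U &, injective edge_dir}.
  move=> e1 e2; rewrite !inE => /eqP tgt1 /eqP tgt2 dir12.
  by apply: edge_inj; rewrite // !edge_src_tgt tgt1 tgt2 dir12.
rewrite -(card_in_imset dir_inj).
suff -> : edge_dir @: edges_into U = U by [].
apply/setP => j; apply/imsetP/idP => [[e] |jU].
  by rewrite inE => /eqP <- ->; rewrite /edge_tgt !inE eqxx orbT.
have jU' : j \notin U :\ j by rewrite setD11.
by exists (exist _ (U :\ j, j) jU') => //; rewrite inE /edge_tgt /= setUC setD1K.
Qed.

Lemma card_edge_tgt e : #|edge_tgt e| = #|edge_src e|.+1.
Proof. by rewrite /edge_tgt setUC cardsU1 edge_dir_notin_src. Qed.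

Context {R : nzRingType}.
Implicit Types (u : {set 'I_n} -> R) (f : edge n -> R).

Lemma innerEBl (f g h : edge n -> R) :
  innerE (fun e => f e - g e) h = innerE f h - innerE g h.
Proof. by rewrite /innerE -sumrB; apply: eq_bigr => e _; rewrite mulrBl. Qed.

Lemma innerE_chi_edge {S : {set 'I_n}} {i : 'I_n} (hiS : i \notin S) f :
  innerE (chi_edge R S i) f = f (exist _ (S, i) hiS).
Proof.
rewrite /innerE (bigD1 (exist _ (S, i) hiS)) //= big1 => [|e ne_e].
  by rewrite /chi_edge eqxx mul1r addr0.
rewrite /chi_edge; case: eqP => [eq_e | _]; last by rewrite mul0r.
by case/eqP: ne_e; apply: val_inj; exact: eq_e.
Qed.

Definition dstar f U : R :=
  \sum_(e in edges_into U) f e - \sum_(e in edges_from U) f e.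

Lemma innerE_dopl u f : innerE (dop u) f = \sum_U u U * dstar f U.
Proof.
have sum_by_vertex (p : edge n -> {set 'I_n}) :
    \sum_e u (p e) * f e = \sum_U u U * \sum_(e in [set e | p e == U]) f e.
  rewrite (partition_big p xpredT) //; apply: eq_bigr => U _.
  by rewrite mulr_sumr; apply: eq_big => e; rewrite ?inE // => /eqP ->.
rewrite /innerE; under eq_bigr do rewrite mulrBl.
rewrite sumrB (sum_by_vertex edge_tgt) (sum_by_vertex edge_src) -sumrB.
by apply: eq_bigr => U _; rewrite mulrBr.
Qed.

Lemma dstar_card {c : nat -> R} {f} U :
  (forall e, f e = c #|edge_src e|) ->
  dstar f U = c #|U|.-1 *+ #|U| - c #|U| *+ (n - #|U|).
Proof.
move=> fc; rewrite /dstar; congr (_ - _).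
  transitivity (\sum_(e in edges_into U) c #|U|.-1).
    by apply: eq_bigr => e; rewrite inE => /eqP <-; rewrite fc card_edge_tgt.
  by rewrite sumr_const card_edges_into.
transitivity (\sum_(e in edges_from U) c #|U|).
  by apply: eq_bigr => e; rewrite inE fc => /eqP ->.
by rewrite sumr_const card_edges_from.
Qed.

Lemma sum_mul_indicator u A : \sum_U u U * (U == A)%:R = u A.
Proof.
under eq_bigr do rewrite mulr_natr mulrb.
by rewrite -big_mkcond big_pred1_eq.
Qed.

Lemma card_eq_setT U : (#|U| == n) = (U == setT).
Proof.
have := max_card U; rewrite card_ord => le_Un.
by rewrite eqEcard subsetT cardsT card_ord eqn_leq le_Un.
Qed.

End Hypercube.

Definition shapley_weight (n k : nat) : nat := (k`! * (n - 1 - k)`!)%N.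

Lemma shapley_weight_predn_mul n k :
  (0 < k <= n)%N -> (shapley_weight n k.-1 * k = k`! * (n - k)`!)%N.
Proof.
case: k => [|k] // /andP[_ le_kn].
rewrite /shapley_weight /= factS (_ : n - 1 - k = n - k.+1)%N; last by lia.
by ring.
Qed.

Lemma shapley_weight_mul_sub n k :
  (k < n)%N -> (shapley_weight n k * (n - k) = k`! * (n - k)`!)%N.
Proof.
move=> lt_kn; rewrite /shapley_weight -mulnA; congr (_ * _)%N.
by rewrite (_ : n - k = (n - 1 - k).+1)%N ?factS 1?mulnC //; lia.
Qed.

Lemma shapley_weight_flux (R : nzRingType) n k : (0 < n)%N -> (k <= n)%N ->
  (shapley_weight n k.-1)%:R *+ k - (shapley_weight n k)%:R *+ (n - k)
  = (n`!)%:R * ((k == n)%:R - (k == 0)%:R) :> R.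
Proof.
move=> n_gt0 le_kn; rewrite -[X in X - _]mulr_natr -[X in _ - X]mulr_natr -!natrM.
have [-> | k_gt0] := posnP k.
  rewrite muln0 shapley_weight_mul_sub // fact0 mul1n subn0 ltn_eqF //.
  by rewrite mulr0n mulr1n !sub0r mulrN1.
have [-> | ne_kn] := eqVneq k n.
  rewrite shapley_weight_predn_mul ?n_gt0 ?leqnn // subnn muln0 fact0 muln1.
  by rewrite mulr0n mulr1n !subr0 mulr1.
rewrite shapley_weight_predn_mul ?k_gt0 // shapley_weight_mul_sub; last first.
  by rewrite ltn_neqAle ne_kn.
by rewrite !subrr mulr0.
Qed.

Definition shapley_potential (R : nzRingType) {n} : {set 'I_n} -> R :=
  fun T => \sum_(k < #|T|) (shapley_weight n k)%:R.

Lemma dop_shapley_potential (R : nzRingType) n (e : edge n) :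
  dop (shapley_potential R) e = (shapley_weight n #|edge_src e|)%:R.
Proof.
rewrite /dop -[_ :|: _]/(edge_tgt e) /shapley_potential card_edge_tgt.
by rewrite big_ord_recr /= addrC addrK.
Qed.

Lemma innerE_dop_shapley_potential (R : nzRingType) n (u : {set 'I_n} -> R) :
  (0 < n)%N -> innerE (dop u) (dop (shapley_potential R)) = (u setT - u set0) *+ n`!.
Proof.
move=> n_gt0; rewrite innerE_dopl.
under eq_bigr => U _.
  rewrite (dstar_card (c := fun k => (shapley_weight n k)%:R) U); last first.
    exact: dop_shapley_potential.
  rewrite shapley_weight_flux //; last first.
    by have := max_card U; rewrite card_ord.
  rewrite card_eq_setT cards_eq0 mulr_natl mulrnAr mulrBr.
  over.
by rewrite /= sumrMnl sumrB !sum_mul_indicator.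
Qed.

Theorem mainTheorem3 (R : realFieldType) (n : nat) (i : 'I_n) (S : {set 'I_n})
  (hiS : i \notin S) (u : {set 'I_n} -> R) :
  is_proj_range_d (chi_edge R S i) (dop u) ->
  u set0 = 0 ->
  u setT = ((#|S|`! * (n - 1 - #|S|)`!)%:R / (n`!)%:R).
Proof.
move=> [_ orth] u0.
have n_gt0 : (0 < n)%N := leq_ltn_trans (leq0n i) (ltn_ord i).
have := orth (shapley_potential R).
rewrite innerEBl (innerE_chi_edge hiS) dop_shapley_potential.
rewrite innerE_dop_shapley_potential // u0 subr0 => /subr0_eq ->.
by rewrite -[u setT *+ _]mulr_natr mulfK // pnatr_eq0 -lt0n fact_gt0.
Qed.
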